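(* Let $L=L_1\times\cdots\times L_k$ where each $L_i$ ($i=1,\dots,k$) is a $C$-lattice. If $q_i$ is a quasi $n_i$-absorbing element of $L_i$ for all $i=1,\dots,k$, then $(q_1,\dots,q_k)$ is a quasi $m$-absorbing element of $L$, where $m=\max\{n_1,\dots,n_k\}+1$.
   Context: A multiplicative lattice is a complete lattice with least element $0$ and compact greatest element $1$, equipped with a commutative, associative product that distributes over arbitrary joins and has $1$ as multiplicative identity. An element $a$ is compact if $a\le\bigvee_{\alpha\in I}a_\alpha$ implies $a\le\bigvee_{\alpha\in I_0}a_\alpha$ for some finite $I_0\subseteq I$. A $C$-lattice is a multiplicative lattice generated under joins by a multiplicatively closed set of compact elements. $L_1\times\cdots\times L_k$ carries the componentwise order and product. $a^0=1$. For a positive integer $t$, a proper element $q$ ($q<1$) of a multiplicative lattice $M$ is quasi $t$-absorbing if whenever $a^tb\le q$ for some compact $a,b\in M$, then $a^t\le q$ or $a^{t-1}b\le q$. *)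

From mathcomp Require Import all_boot.
From Stdlib Require List.
Set Implicit Arguments. Unset Strict Implicit. Unset Printing Implicit Defensive.

Record mlat := MLat {
  car :> Type;
  le : car -> car -> Prop;
  sup : (car -> Prop) -> car;
  bot : car;
  top : car;
  mul : car -> car -> car }.

Arguments le {m}. Arguments sup {m}. Arguments bot {m}. Arguments top {m}.
Arguments mul {m}.

Definition jn (M : mlat) (I : Type) (f : I -> M) : M := sup (fun x => exists i, x = f i).

Fixpoint mpow (M : mlat) (a : M) (t : nat) : M :=
  match t with 0 => top | t'.+1 => mul a (mpow a t') end.

Definition compact (M : mlat) (a : M) : Prop :=
  forall (I : Type) (f : I -> M), le a (jn f) ->
    exists I0 : seq I, le a (jn (fun j : {i : I | Stdlib.Lists.List.In i I0} => f (proj1_sig j))).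

Definition is_mult_lattice (M : mlat) : Prop :=
  (forall x : M, le x x) /\
  (forall x y : M, le x y -> le y x -> x = y) /\
  (forall x y z : M, le x y -> le y z -> le x z) /\
  (forall (P : M -> Prop) x, P x -> le x (sup P)) /\
  (forall (P : M -> Prop) u, (forall x, P x -> le x u) -> le (sup P) u) /\
  (forall x : M, le bot x /\ le x top) /\
  compact (top : M) /\
  (forall x y : M, mul x y = mul y x) /\
  (forall x y z : M, mul x (mul y z) = mul (mul x y) z) /\
  (forall (a : M) (I : Type) (f : I -> M), mul a (jn f) = jn (fun i => mul a (f i))) /\
  (forall x : M, mul top x = x).

Definition is_C_lattice (M : mlat) : Prop :=
  is_mult_lattice M /\
  exists S : M -> Prop,
    [/\ (forall x, S x -> compact x),
        S top,
        (forall x y, S x -> S y -> S (mul x y)) &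
        (forall x : M, exists P : M -> Prop, (forall y, P y -> S y) /\ x = sup P)].

Definition proper (M : mlat) (q : M) : Prop := le q top /\ q <> top.

Definition quasi_absorbing (M : mlat) (t : nat) (q : M) : Prop :=
  0 < t /\ proper q /\
  forall a b : M, compact a -> compact b ->
    le (mul (mpow a t) b) q -> le (mpow a t) q \/ le (mul (mpow a t.-1) b) q.

Definition prod_mlat (k : nat) (L : 'I_k -> mlat) : mlat :=
  @MLat (forall i : 'I_k, L i)
    (fun x y => forall i, le (x i) (y i))
    (fun P i => sup (fun y => exists x, P x /\ x i = y))
    (fun i => bot) (fun i => top)
    (fun x y i => mul (x i) (y i)).

From Pilot Require Import Defs.
From mathcomp Require Import all_boot.
From mathcomp Require Import zify.
From Stdlib Require Import Classical.

Set Implicit Arguments. Unset Strict Implicit. Unset Printing Implicit Defensive.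
Local Notation mul := Defs.mul.
Local Notation le := Defs.le.

(* In a lattice where every element is a join of compact elements, the
   quasi N-absorbing condition for q extends from compact b to arbitrary b:
   if a^N is not below q, apply it to each compact s below b and take joins.
   Given a^(m+1) b <= q with N <= m, apply this to b' := a^(m+1-N) b: either
   a^m b <= a^N <= q, or a^(N-1) b' = a^m b <= q.  In the product, compact
   elements have compact components, and each component of a^(m+1) b is
   a_i^(m+1) b_i with n_i <= m, so a^m b <= q whenever a^(m+1) b <= q. *)

Section MultLattice.

Variable M : mlat.
Hypothesis hM : is_mult_lattice M.

Lemma ml_refl (x : M) : le x x.
Proof. by case: hM. Qed.

Lemma ml_anti (x y : M) : le x y -> le y x -> x = y.
Proof. by case: hM => _ [h _]; apply: h. Qed.

Lemma ml_trans (x y z : M) : le x y -> le y z -> le x z.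
Proof. by case: hM => _ [_ [h _]]; apply: h. Qed.

Lemma ml_sup_ub (P : M -> Prop) x : P x -> le x (sup P).
Proof. by case: hM => _ [_ [_ [h _]]]; apply: h. Qed.

Lemma ml_sup_lub (P : M -> Prop) u : (forall x, P x -> le x u) -> le (sup P) u.
Proof. by case: hM => _ [_ [_ [_ [h _]]]]; apply: h. Qed.

Lemma ml_bot (x : M) : le bot x.
Proof. by case: hM => _ [_ [_ [_ [_ [h _]]]]]; case: (h x). Qed.

Lemma ml_top (x : M) : le x top.
Proof. by case: hM => _ [_ [_ [_ [_ [h _]]]]]; case: (h x). Qed.

Lemma ml_mulC (x y : M) : mul x y = mul y x.
Proof. by case: hM => _ [_ [_ [_ [_ [_ [_ [h _]]]]]]]; apply: h. Qed.

Lemma ml_mulA (x y z : M) : mul x (mul y z) = mul (mul x y) z.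
Proof. by case: hM => _ [_ [_ [_ [_ [_ [_ [_ [h _]]]]]]]]; apply: h. Qed.

Lemma ml_mul_jn (a : M) (I : Type) (f : I -> M) :
  mul a (jn f) = jn (fun i => mul a (f i)).
Proof. by case: hM => _ [_ [_ [_ [_ [_ [_ [_ [_ [h _]]]]]]]]]; apply: h. Qed.

Lemma ml_mul1 (x : M) : mul top x = x.
Proof. by case: hM => _ [_ [_ [_ [_ [_ [_ [_ [_ [_ h]]]]]]]]]; apply: h. Qed.

Lemma sup_jnE (P : M -> Prop) : sup P = jn (fun p : {x | P x} => proj1_sig p).
Proof.
apply: ml_anti.
  by apply: ml_sup_lub => x Px; apply: ml_sup_ub; exists (exist _ x Px).
by apply: ml_sup_lub => _ [[x Px] ->]; apply: ml_sup_ub.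
Qed.

(* Monotonicity comes from distributivity over the two-element join of x and y. *)
Lemma ml_mul_monor (x y z : M) : le x y -> le (mul z x) (mul z y).
Proof.
move=> lexy.
have -> : y = jn (fun c : bool => if c then x else y).
  apply: ml_anti; first by apply: ml_sup_ub; exists false.
  by apply: ml_sup_lub => _ [[|] ->] //; apply: ml_refl.
by rewrite ml_mul_jn; apply: ml_sup_ub; exists true.
Qed.

Lemma ml_mul_lel (x y : M) : le (mul x y) x.
Proof.
have := ml_mul_monor x (ml_top y).
by rewrite [mul x top]ml_mulC ml_mul1.
Qed.

Lemma mpowD (a : M) s t : mpow a (s + t) = mul (mpow a s) (mpow a t).
Proof. by elim: s => [|s IH] /=; rewrite ?ml_mul1 // IH ml_mulA. Qed.

Definition compactly_generated : Prop :=
  forall x : M, exists P : M -> Prop, (forall y, P y -> compact y) /\ x = sup P.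

Hypothesis hgen : compactly_generated.

Lemma quasi_absorbing_all N (q a b : M) : quasi_absorbing N q -> compact a ->
  le (mul (mpow a N) b) q -> le (mpow a N) q \/ le (mul (mpow a N.-1) b) q.
Proof.
move=> [_ [_ hq]] ca; have [P [Pcompact ->]] := hgen b => leab.
case: (classic (le (mpow a N) q)) => [|not_aNq]; [by left | right].
rewrite sup_jnE ml_mul_jn; apply: ml_sup_lub => _ [[s Ps] ->] /=.
have les : le s (sup P) by apply: ml_sup_ub.
by case: (hq a s ca (Pcompact s Ps) (ml_trans (ml_mul_monor _ les) leab)).
Qed.

Lemma quasi_absorbing_mpowS N m (q a b : M) : quasi_absorbing N q -> compact a ->
  (N <= m)%N -> le (mul (mpow a m.+1) b) q -> le (mul (mpow a m) b) q.
Proof.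
move=> qabs ca leNm leab.
have Npos : (0 < N)%N by case: qabs.
pose b' := mul (mpow a (m.+1 - N)) b.
have b'E j : mul (mpow a j) b' = mul (mpow a (j + (m.+1 - N))) b.
  by rewrite /b' ml_mulA -mpowD.
have leab' : le (mul (mpow a N) b') q.
  by rewrite b'E (_ : N + _ = m.+1)%N //; lia.
have [leaNq|] := quasi_absorbing_all qabs ca leab'.
  apply: ml_trans (ml_mul_lel _ _) _.
  rewrite -(subnK leNm) mpowD ml_mulC.
  exact: ml_trans (ml_mul_lel _ _) leaNq.
by rewrite b'E (_ : N.-1 + _ = m)%N //; lia.
Qed.

End MultLattice.

Lemma C_lattice_compactly_generated (M : mlat) :
  is_C_lattice M -> compactly_generated M.
Proof.
case=> _ [S [Scompact _ _ Sgen]] x.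
have [P [PS eP]] := Sgen x.
by exists P; split => // y /PS /Scompact.
Qed.

Section Product.

Variables (k : nat) (L : 'I_k -> mlat).
Hypothesis hL : forall i, is_mult_lattice (L i).

Lemma prod_mpowE (a : prod_mlat L) t i : mpow a t i = mpow (a i) t.
Proof. by elim: t => [|t IH] //=; rewrite IH. Qed.

(* The family g at coordinate i is lifted to the product by putting top at
   every other coordinate; this needs an index of g, hence the empty case. *)
Lemma compact_proj (a : prod_mlat L) i : compact a -> compact (a i).
Proof.
move=> ca I g leg.
case: (classic (inhabited I)) => [[j0]|noI]; last first.
  exists [::]; apply: ml_trans (hL i) _ _ _ leg _.
  by apply: ml_sup_lub (hL i) _ _ _ => ? [j _]; case: noI; exists.
pose f j : prod_mlat L := dfwith (fun i' => top : L i') (g j).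
have lef : le a (jn f).
  move=> i' /=; case: (dfwithP (fun i' => top : L i') (g j0) i') => [|i'' ne].
    apply: ml_trans (hL i) _ _ _ leg _.
    apply: ml_sup_lub (hL i) _ _ _ => _ [j ->].
    by apply: ml_sup_ub (hL i) _ _ _; exists (f j); split; [exists j | rewrite /f dfwith_in].
  apply: ml_trans (hL i'') _ _ _ (ml_top (hL i'') _) _.
  apply: ml_sup_ub (hL i'') _ _ _; exists (f j0); split; first by exists j0.
  by rewrite /f dfwith_out.
have [I0 leI0] := ca I f lef; exists I0.
apply: ml_trans (hL i) _ _ _ (leI0 i) _.
apply: ml_sup_lub (hL i) _ _ _ => _ [_ [[j ->] <-]].
by apply: ml_sup_ub (hL i) _ _ _; exists j; rewrite /f dfwith_in.
Qed.

End Product.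

Theorem mainTheorem13 (k : nat) (hk : 0 < k) (L : 'I_k -> mlat)
  (hL : forall i, is_C_lattice (L i))
  (n : 'I_k -> nat) (q : forall i : 'I_k, L i)
  (hq : forall i, quasi_absorbing (n i) (q i)) :
  @quasi_absorbing (prod_mlat L) ((\max_(i < k) n i).+1) q.
Proof.
have hM i : is_mult_lattice (L i) by case: (hL i).
have q_proper i : Defs.proper (q i) by case: (hq i) => _ [].
split=> //; split.
  split=> [i|q_top]; first by case: (q_proper i).
  by case: (q_proper (Ordinal hk)) => _; rewrite q_top.
move=> a b ca _ leab; right=> i /=.
have := leab i; rewrite /= !prod_mpowE.
apply: (quasi_absorbing_mpowS (hM i) (C_lattice_compactly_generated (hL i)) (hq i)).
  exact: compact_proj.
exact: leq_bigmax.
Qed.
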